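(* Let $M$ be a paving matroid of rank $r \ge 3$, let $S = \{s_1,\dots,s_r\}$ be a basis of $M$, and let $e_1 e_2\cdots e_m$ (with $m \ge r$) be a cyclic ordering of $M\backslash S$, i.e., any $r$ cyclically consecutive elements form a basis of $M$. Suppose that for every $i \in \{1,\dots,m\}$ and every permutation $\pi$ of $\{1,\dots,r\}$, the sequence $e_1\cdots e_i\, s_{\pi(1)}\cdots s_{\pi(r)}\, e_{i+1}\cdots e_m$ is not a cyclic ordering of $M$. Fix $j \in \{1,\dots,m\}$, let $x_t = e_{j-t}$ and $y_t = e_{j+t-1}$ for $t = 1,\dots,r-1$ (indices taken modulo $m$ in $\{1,\dots,m\}$). Let $\mathcal{H}_1$ be the set of all $C \cap S$ where $C$ is a circuit of $M$ with $|C| = r$ and $\{x_1,\dots,x_i\} \subset C \subseteq \{x_1,\dots,x_i\} \cup S$ for some $i \in \{1,\dots,r-1\}$, and let $\mathcal{H}_2$ be the set of all $C\cap S$ where $C$ is a circuit with $|C|=r$ and $\{y_1,\dots,y_i\} \subset C \subseteq \{y_1,\dots,y_i\}\cup S$ for some $i\in\{1,\dots,r-1\}$. Then $(\mathcal{H}_1,\mathcal{H}_2)$ is an $S$-pair which is order consistent with respect to $S$.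
   Context: A matroid $M$ of rank $r$ is a paving matroid if every circuit has at least $r$ elements. Let $S$ be a finite nonempty set and $\mathcal{S}_1, \mathcal{S}_2 \subseteq 2^S$. The pair $(\mathcal{S}_1,\mathcal{S}_2)$ is an $S$-pair if: (S1) for $i=1,2$, if $A,B \in \mathcal{S}_i$ with $B \subset A$ and $|A| = |B|+1$, then every $|B|$-element subset of $A$ lies in $\mathcal{S}_i$; (S2) for $i=1,2$, if $A,B \in \mathcal{S}_i$ with $|A|=|B|$ and $|A\cap B| = |A|-1$, then $A\cup B \in \mathcal{S}_i$; (S3) for $i=1,2$, not every singleton $\{s\}$, $s\in S$, lies in $\mathcal{S}_i$, and $S \notin \mathcal{S}_i$; (S4) for $k = 1,\dots,|S|-1$ and $x\in S$, if every $k$-element subset of $S - x$ lies in $\mathcal{S}_1$, then not every $(|S|-k)$-element subset of $S-x$ lies in $\mathcal{S}_2$. The pair $(\mathcal{S}_1,\mathcal{S}_2)$ is order consistent with respect to $S$ (where $|S|=n$) if for every ordering $s_1 s_2\cdots s_n$ of $S$ there exists $i\in\{1,\dots,n\}$ such that $\{s_1,\dots,s_i\} \in \mathcal{S}_1$ or $\{s_i,\dots,s_n\} \in \mathcal{S}_2$. *)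

From mathcomp Require Import all_boot.
Set Implicit Arguments. Unset Strict Implicit. Unset Printing Implicit Defensive.

Record matroid (T : finType) := Matroid {
  indep : pred {set T};
  indep0 : indep set0;
  indep_sub : forall A B : {set T}, B \subset A -> indep A -> indep B;
  indep_aug : forall A B : {set T}, indep A -> indep B -> #|A| < #|B| ->
     exists2 x, x \in B :\: A & indep (x |: A) }.

Section Matroid.
Variables (T : finType) (M : matroid T).

Definition basis (B : {set T}) : bool :=
  indep M B && [forall X : {set T}, (B \proper X) ==> ~~ indep M X].

Definition rank : nat := \max_(X : {set T} | indep M X) #|X|.

Definition circuit (C : {set T}) : bool :=
  ~~ indep M C && [forall x in C, indep M (C :\ x)].

Definition paving : Prop := forall C, circuit C -> rank <= #|C|.

Definition cyclic_ordering (X : {set T}) (s : seq T) : Prop :=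
  [/\ uniq s, [set x in s] = X &
      forall k, k < size s -> basis [set x in take rank (rot k s)]].

Definition Hfam (S : {set T}) (xs : seq T) : {set {set T}} :=
  [set D : {set T} | [exists C : {set T},
     [&& circuit C, #|C| == rank, D == C :&: S &
         [exists i : 'I_rank, (0 < (i : nat)) &&
            ([set x in take i xs] \proper C) &&
            (C \subset [set x in take i xs] :|: S)]]]].
End Matroid.

Section Spair.
Variable (T : finType).

Definition spair (S : {set T}) (S1 S2 : {set {set T}}) : Prop :=
  [/\ (S1 \subset powerset S) && (S2 \subset powerset S),
  (forall Si, Si = S1 \/ Si = S2 ->
     forall A B : {set T}, A \in Si -> B \in Si -> B \proper A -> #|A| = #|B|.+1 ->
     forall D : {set T}, D \subset A -> #|D| = #|B| -> D \in Si),
  (forall Si, Si = S1 \/ Si = S2 ->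
     forall A B : {set T}, A \in Si -> B \in Si -> #|A| = #|B| ->
     #|A :&: B|.+1 = #|A| -> A :|: B \in Si),
  (forall Si, Si = S1 \/ Si = S2 ->
     ~ (forall s, s \in S -> [set s] \in Si) /\ S \notin Si) &
  (forall k x, 1 <= k <= #|S| - 1 -> x \in S ->
     (forall D : {set T}, D \subset S :\ x -> #|D| = k -> D \in S1) ->
     ~ (forall D : {set T}, D \subset S :\ x -> #|D| = #|S| - k -> D \in S2))].

Definition order_consistent (S : {set T}) (S1 S2 : {set {set T}}) : Prop :=
  forall s : seq T, uniq s -> [set x in s] = S ->
    exists2 i, 1 <= i <= size s &
      [set x in take i s] \in S1 \/ [set x in drop i.-1 s] \in S2.
End Spair.

(* Write X_n for the first n entries of xs (xs = x_1 x_2 ... or y_1 y_2 ...).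
   Since M is paving, every set of fewer than r elements is independent, so
   D \subset S lies in the family iff X_(r - |D|) :|: D is dependent.  All
   axioms rest on one exchange argument: if each element of V outside an
   independent (r-1)-set Z makes Z dependent, then V contains no basis.
   Closure under subsets and unions, and the failure of the singletons, apply
   it with Z of the form X_n :|: D.  For (S4), full layers of both families
   put the cyclic window x_(r-k) ... x_1 y_1 ... y_k into the closure of
   S :\ x.  Finally, if an ordering s of S were not order consistent, every
   window of s ++ y_1 ... y_m would be a basis, i.e. S could be inserted into
   the cyclic ordering. *)

From mathcomp Require Import all_boot zify.
Set Implicit Arguments. Unset Strict Implicit. Unset Printing Implicit Defensive.

Section MatroidRank.
Variables (T : finType) (M : matroid T).

Lemma indep_card_le_rank A : indep M A -> #|A| <= rank M.
Proof. by move=> indA; exact: (leq_bigmax_cond A indA). Qed.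

Lemma exists_indep_card_rank : exists2 A, indep M A & #|A| = rank M.
Proof.
have indep_set0 : 0 < #|indep M| by apply/card_gt0P; exists set0; exact: indep0.
have [A indA defA] := eq_bigmax_cond (fun X : {set T} => #|X|) indep_set0.
by exists A; rewrite // /rank -defA.
Qed.

Lemma card_basis B : basis M B -> #|B| = rank M.
Proof.
case/andP=> indB /forallP maxB; apply/eqP; rewrite eqn_leq indep_card_le_rank //=.
rewrite leqNgt; apply/negP=> ltBr.
have [A indA cardA] := exists_indep_card_rank.
have ltBA : #|B| < #|A| by rewrite cardA.
have [x /setDP [_ xB] indxB] := indep_aug indB indA ltBA.
have ltBxB : B \proper x |: B by rewrite properEcard subsetUr cardsU1 xB /= add1n ltnSn.
by have := maxB (x |: B); rewrite ltBxB indxB.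
Qed.

Lemma indep_card_rank_basis B : indep M B -> #|B| = rank M -> basis M B.
Proof.
move=> indB cardB; rewrite /basis indB; apply/forallP=> X; apply/implyP=> ltBX.
apply/negP=> /indep_card_le_rank; have := proper_card ltBX; lia.
Qed.

Lemma card_rank_dependent (Z V : {set T}) :
  indep M Z -> #|Z|.+1 = rank M ->
  (forall v, v \in V -> v \notin Z -> ~~ indep M (v |: Z)) ->
  forall I : {set T}, I \subset V -> #|I| = rank M -> ~~ indep M I.
Proof.
move=> indZ cardZ closedZ I subIV cardI; apply/negP=> indI.
have ltZI : #|Z| < #|I| by rewrite cardI -cardZ.
have [x /setDP [xI xZ]] := indep_aug indZ indI ltZI.
by apply/negP; exact: closedZ (subsetP subIV x xI) xZ.
Qed.

Hypothesis paving_M : paving M.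

Lemma paving_indep (A : {set T}) : #|A| < rank M -> indep M A.
Proof.
elim: {A}#|A| {-2}A (erefl #|A|) => [|n IHn] A cardA ltAr.
  by move/eqP: cardA; rewrite cards_eq0 => /eqP->; exact: indep0.
apply/negPn/negP=> depA.
have circA : circuit M A.
  rewrite /circuit depA; apply/forallP=> x; apply/implyP=> xA.
  by apply: IHn; move: cardA ltAr; rewrite (cardsD1 x A) xA; lia.
by have := paving_M circA; lia.
Qed.

End MatroidRank.

Lemma cardsU_disjoint (T : finType) (A B : {set T}) :
  [disjoint A & B] -> #|A :|: B| = #|A| + #|B|.
Proof. by move=> disAB; apply/eqP; rewrite (leq_card_setU A B).2. Qed.

Lemma card_set_take (T : finType) (s : seq T) n :
  uniq s -> n <= size s -> #|[set x in take n s]| = n.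
Proof.
move=> uniq_s le_n_s; rewrite cardsE (card_uniqP (take_uniq n uniq_s)).
exact: size_takel.
Qed.

Lemma card_set_drop (T : finType) (s : seq T) n :
  uniq s -> #|[set x in drop n s]| = size s - n.
Proof. by move=> uniq_s; rewrite cardsE (card_uniqP (drop_uniq n uniq_s)) size_drop. Qed.

Lemma set_take_subset (T : finType) (s : seq T) m n :
  m <= n -> [set x in take m s] \subset [set x in take n s].
Proof.
by move=> le_mn; apply/subsetP=> x; rewrite !inE -(take_takel s le_mn); apply: mem_take.
Qed.

Lemma set_cat (T : finType) (s1 s2 : seq T) :
  [set x in s1 ++ s2] = [set x in s1] :|: [set x in s2].
Proof. by apply/setP=> y; rewrite !inE mem_cat. Qed.

Lemma set_rev (T : finType) (s : seq T) : [set x in rev s] = [set x in s].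
Proof. by apply/setP=> y; rewrite !inE mem_rev. Qed.

Lemma setU1_card_eq (T : finType) (A B : {set T}) v :
  v \in A -> B \subset A -> #|A| = #|B|.+1 -> v \notin B -> v |: B = A.
Proof.
move=> vA subBA cardA vB; apply/eqP; rewrite eqEcard cardsU1 vB cardA leqnn andbT.
by rewrite subUset sub1set vA subBA.
Qed.

Lemma exists_subset_card (T : finType) (W : {set T}) k :
  k <= #|W| -> exists2 D : {set T}, D \subset W & #|D| = k.
Proof.
move=> le_k_W; have : 0 < #|[set A : {set T} | A \subset W & #|A| == k]|.
  by rewrite cards_draws bin_gt0.
by case/card_gt0P=> D; rewrite inE => /andP [subDW /eqP cardD]; exists D.
Qed.

Section PrefixCircuits.
Variables (T : finType) (M : matroid T) (S : {set T}) (xs : seq T).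
Hypotheses (paving_M : paving M) (uniq_xs : uniq xs)
  (xs_notin_S : {in xs, forall x, x \notin S}) (rank_le_size : rank M <= size xs).

Local Notation r := (rank M).
Local Notation prefix n := [set x in take n xs].

Lemma disjoint_prefix n (D : {set T}) : D \subset S -> [disjoint prefix n & D].
Proof.
move=> subDS; apply/pred0P=> y /=; rewrite inE; apply/negP=> /andP [yxs yD].
by move: (xs_notin_S (mem_take yxs)); rewrite (subsetP subDS y yD).
Qed.

Lemma card_prefixU n (D : {set T}) :
  D \subset S -> n <= r -> #|prefix n :|: D| = n + #|D|.
Proof.
move=> subDS le_nr; rewrite cardsU_disjoint ?disjoint_prefix //.
by rewrite card_set_take //; lia.
Qed.

(* An [r]-element circuit [C] with [prefix i \proper C \subset prefix i :|: S]
   is recovered from [D = C :&: S] as [prefix (r - #|D|) :|: D]. *)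
Lemma mem_Hfam D : D \in Hfam M S xs =
  [&& D \subset S, 0 < #|D|, #|D| < r & ~~ indep M (prefix (r - #|D|) :|: D)].
Proof.
apply/idP/idP.
  rewrite inE => /existsP [C /and4P [circC /eqP cardC /eqP-> /existsP [i]]].
  case/andP=> /andP [i_gt0 ltXC] subCXS.
  have subCS : C :&: S \subset S by exact: subsetIr.
  have lt_i_r := ltn_ord i.
  have defC : C = prefix i :|: (C :&: S).
    apply/setP=> y; rewrite !inE; apply/idP/idP.
      move=> yC; case yS: (y \in S); first by rewrite yC orbT.
      by move: (subsetP subCXS y yC); rewrite !inE yS andbF !orbF.
    by case/orP=> [yX | /andP [] //]; apply: (subsetP (proper_sub ltXC)); rewrite inE.
  have cardCS : #|C :&: S| = r - i.
    by move: cardC; rewrite {1}defC card_prefixU //; lia.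
  rewrite subCS cardCS (_ : r - (r - i) = i); last by lia.
  by rewrite -defC; case/andP: circC => -> _; apply/and3P; split; lia.
case/and4P=> subDS D_gt0 ltDr depXD.
have cardXD : #|prefix (r - #|D|) :|: D| = r by rewrite card_prefixU //; lia.
rewrite inE; apply/existsP; exists (prefix (r - #|D|) :|: D); apply/and4P; split.
- rewrite /circuit depXD; apply/forallP=> y; apply/implyP=> yXD.
  by apply: paving_indep => //; move: cardXD; rewrite (cardsD1 y) yXD; lia.
- by rewrite cardXD.
- by rewrite setIUl (setIidPl subDS) (disjoint_setI0 (disjoint_prefix _ (subxx S))) set0U.
- have lt_i_r : r - #|D| < r by lia.
  apply/existsP; exists (Ordinal lt_i_r) => /=.
  rewrite properEcard subsetUl cardXD card_set_take //; last by lia.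
  by rewrite setUS // andbT; apply/and3P; split=> //; lia.
Qed.

Lemma indep_prefixU n (D : {set T}) : D \subset S -> n + #|D| < r -> indep M (prefix n :|: D).
Proof. by move=> subDS ltr; apply: paving_indep; rewrite // card_prefixU //; lia. Qed.

Lemma setU1_prefix n v : n < r -> v \in prefix n.+1 -> v \notin prefix n ->
  v |: prefix n = prefix n.+1.
Proof.
move=> lt_nr vXn1 vXn; apply: setU1_card_eq vXn1 (set_take_subset _ (leqnSn n)) _ vXn.
by rewrite !card_set_take //; lia.
Qed.

Lemma Hfam_subset_closed (A B : {set T}) :
  A \in Hfam M S xs -> B \in Hfam M S xs -> B \proper A -> #|A| = #|B|.+1 ->
  forall D : {set T}, D \subset A -> #|D| = #|B| -> D \in Hfam M S xs.
Proof.
rewrite !mem_Hfam => /and4P [subAS A_gt0 _ depA] /and4P [subBS B_gt0 ltBr depB].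
move=> ltBA cardA D subDA cardD; have subDS := subset_trans subDA subAS.
rewrite mem_Hfam subDS cardD B_gt0 ltBr /=.
set n := r - #|A| in depA; have defn : r - #|B| = n.+1 by rewrite /n cardA; lia.
have lt_nr : n < r by rewrite /n; lia.
rewrite defn in depB *.
apply: (@card_rank_dependent _ M (prefix n :|: B) (prefix n.+1 :|: A)).
- by apply: indep_prefixU => //; lia.
- by rewrite card_prefixU //; lia.
- move=> v /setUP [vXn1 | vA]; rewrite in_setU negb_or => /andP [vXn vB].
    by rewrite setUA setU1_prefix.
  by rewrite setUCA (setU1_card_eq vA (proper_sub ltBA) cardA vB).
- exact: setUS.
- by rewrite card_prefixU //; lia.
Qed.

Lemma Hfam_layer_dependent (W : {set T}) n : W \subset S -> #|W|.+1 = r -> 0 < n < r ->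
  (forall D : {set T}, D \subset W -> #|D| = n -> D \in Hfam M S xs) ->
  forall I : {set T}, I \subset prefix (r - n) :|: W -> #|I| = r -> ~~ indep M I.
Proof.
move=> subWS cardW n_range layer_in.
have [D subDW cardD] : exists2 D : {set T}, D \subset W & #|D| = n.
  by apply: exists_subset_card; lia.
have [d dD] : exists d, d \in D by apply/card_gt0P; lia.
have subDdW : D :\ d \subset W := subset_trans (subD1set D d) subDW.
have subDdS := subset_trans subDdW subWS.
have cardDd : #|D :\ d|.+1 = n by rewrite -cardD (cardsD1 d D) dD.
apply: (@card_rank_dependent _ M (prefix (r - n) :|: (D :\ d))).
- by apply: indep_prefixU => //; lia.
- by rewrite card_prefixU //; lia.
- move=> v /setUP [vX | vW]; rewrite in_setU negb_or => /andP [vXn vDd].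
    by rewrite vX in vXn.
  have subvDW : v |: (D :\ d) \subset W by rewrite subUset sub1set vW subDdW.
  have cardvD : #|v |: (D :\ d)| = n by rewrite cardsU1 vDd add1n cardDd.
  by move: (layer_in _ subvDW cardvD); rewrite mem_Hfam cardvD setUCA => /and4P [].
Qed.

Hypothesis basis_S : basis M S.

Lemma Hfam_union_closed (A B : {set T}) :
  A \in Hfam M S xs -> B \in Hfam M S xs -> #|A| = #|B| -> #|A :&: B|.+1 = #|A| ->
  A :|: B \in Hfam M S xs.
Proof.
rewrite !mem_Hfam => /and4P [subAS A_gt0 ltAr depA] /and4P [subBS _ _ depB] cardAB cardI.
rewrite -cardAB in depB.
set X := prefix (r - #|A|) in depA depB.
have subUS : A :|: B \subset S by rewrite subUset subAS subBS.
have cardU : #|A :|: B| = #|A|.+1 by rewrite cardsU -cardAB; lia.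
have cardAI : #|A| = #|A :&: B|.+1 by rewrite cardI.
have cardBI : #|B| = #|A :&: B|.+1 by rewrite -cardAB cardI.
have subIS : A :&: B \subset S := subset_trans (subsetIl A B) subAS.
have depV : forall I : {set T}, I \subset X :|: (A :|: B) -> #|I| = r -> ~~ indep M I.
  apply: (@card_rank_dependent _ M (X :|: (A :&: B))).
  - by apply: indep_prefixU => //; lia.
  - by rewrite card_prefixU //; lia.
  - move=> v /setUP [vX | vAB]; rewrite in_setU negb_or => /andP [vXn vI].
      by rewrite vX in vXn.
    rewrite setUCA; case/setUP: vAB => [vA | vB].
    + by rewrite (setU1_card_eq vA (subsetIl A B) cardAI vI).
    + by rewrite (setU1_card_eq vB (subsetIr A B) cardBI vI).
have ltUr : #|A|.+1 < r.
  rewrite ltn_neqAle -cardU -(card_basis basis_S) subset_leq_card // andbT.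
  apply/negP=> /eqP cardUS; have defU : A :|: B = S by apply/eqP; rewrite eqEcard subUS cardUS leqnn.
  have := depV (A :|: B) (subsetUr X _); rewrite defU (card_basis basis_S).
  by move=> /(_ erefl); case/andP: basis_S => ->.
rewrite subUS cardU ltUr /=; apply: depV.
- by apply: setSU; apply: set_take_subset; lia.
- by rewrite card_prefixU //; lia.
Qed.

Lemma Hfam_nontrivial : 0 < r ->
  ~ (forall s, s \in S -> [set s] \in Hfam M S xs) /\ S \notin Hfam M S xs.
Proof.
move=> r_gt0; split; last by rewrite mem_Hfam (card_basis basis_S) ltnn !andbF.
move=> singletons_in; have indS : indep M S by case/andP: basis_S.
apply/negP: indS; apply: (@card_rank_dependent _ M (prefix r.-1) S) => //.
- by apply: paving_indep => //; rewrite card_set_take //; lia.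
- by rewrite (@card_set_take _ xs r.-1) //; lia.
- move=> v vS _; move: (singletons_in v vS).
  by rewrite mem_Hfam cards1 subn1 setUC => /and4P [].
- exact: card_basis.
Qed.

End PrefixCircuits.

Lemma rot_rot_exists (T : Type) k n (s : seq T) : exists n', rot k (rot n s) = rot n' s.
Proof.
case: (leqP n (size s)) => le_ns; last by rewrite (rot_oversize (ltnW le_ns)); exists k.
case: (leqP k (size s)) => le_ks; last first.
  by rewrite rot_oversize ?size_rot ?(ltnW le_ks) //; exists n.
by rewrite rot_add_mod //; eexists.
Qed.

Lemma rot_cat_small (T : Type) k (s1 s2 : seq T) : k <= size s1 ->
  rot k (s1 ++ s2) = drop k s1 ++ s2 ++ take k s1.
Proof.
move=> le_k_s1; rewrite /rot drop_cat take_cat catA; case: ltnP => // le_s1_k.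
have -> : k = size s1 by lia.
by rewrite subnn drop0 take0 cats0 drop_size take_size.
Qed.

Lemma rot_cat_large (T : Type) k (s1 s2 : seq T) : size s1 <= k ->
  rot k (s1 ++ s2) = drop (k - size s1) s2 ++ s1 ++ take (k - size s1) s2.
Proof. by move=> le_s1_k; rewrite /rot drop_cat take_cat; case: ltnP => //; lia. Qed.

Lemma set_take_rot_wrap (T : finType) (s : seq T) a c : a + c <= size s ->
  [set x in take (a + c) (rot (size s - a) s)] =
  [set x in take a (rev s)] :|: [set x in take c s].
Proof.
move=> le_ac_s; rewrite /rot take_cat size_drop (_ : size s - (size s - a) = a); last by lia.
rewrite ltnNge leq_addr /= set_cat take_rev set_rev.
by rewrite (_ : a + c - a = c) ?take_takel //; lia.
Qed.

Lemma insert_rotr (T : Type) (s es : seq T) i : i <= size es ->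
  take i es ++ s ++ drop i es = rotr i (s ++ rot i es).
Proof.
move=> le_i_es; rewrite -[LHS](rotK i) -{2}(size_takel le_i_es) rot_size_cat.
by rewrite -catA.
Qed.

Section CyclicWindows.
Variables (T : finType) (M : matroid T).

Local Notation r := (rank M).

Definition windows_basis (s : seq T) : Prop :=
  forall n, basis M [set x in take r (rot n s)].

Lemma windows_basis_rot s k : windows_basis s -> windows_basis (rot k s).
Proof. by move=> win_s n; have [n' ->] := rot_rot_exists n k s. Qed.

Lemma cyclic_ordering_windows X s :
  0 < size s -> cyclic_ordering M X s -> windows_basis s.
Proof.
move=> s_gt0 [_ _ win_s] n; case: (ltnP n (size s)) => [|le_s_n]; first exact: win_s.
by rewrite (rot_oversize le_s_n) -(rot0 s); apply: win_s.
Qed.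

Lemma windows_basis_cyclic_ordering s :
  uniq s -> windows_basis s -> cyclic_ordering M [set x in s] s.
Proof. by move=> uniq_s win_s; split. Qed.

Lemma windows_basis_cat (s ys : seq T) :
  0 < r -> uniq (s ++ ys) -> size s = r -> r <= size ys -> windows_basis ys ->
  indep M [set x in s] ->
  (forall c, 0 < c < r -> indep M ([set x in take (r - c) (rev ys)] :|: [set x in take c s])) ->
  (forall c, 0 < c < r -> indep M ([set x in take c ys] :|: [set x in drop c s])) ->
  windows_basis (s ++ ys).
Proof.
move=> r_gt0 uniq_sys size_s le_r_ys win_ys indS wrap_indep straddle_indep.
apply: (@cyclic_ordering_windows [set x in s ++ ys]); first by rewrite size_cat size_s addn_gt0 r_gt0.
split=> // k; rewrite size_cat => lt_k_size.
apply: indep_card_rank_basis; last first.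
  by apply: card_set_take; rewrite ?rot_uniq // size_rot size_cat; lia.
case: (leqP r k) => [le_rk | lt_kr].
  rewrite rot_cat_large size_s //; set a := k - r.
  case: (leqP (a + r) (size ys)) => [le_ar_ys | lt_ys_ar].
    rewrite takel_cat; last by rewrite size_drop; lia.
    by have /andP [] := win_ys a; rewrite /rot takel_cat // size_drop; lia.
  rewrite take_cat size_drop ltnNge (_ : size ys - a <= r) /=; last by lia.
  rewrite takel_cat ?size_s; last by lia.
  have := wrap_indep (r - (size ys - a)); rewrite take_rev set_cat set_rev.
  by rewrite (_ : size ys - (r - (r - (size ys - a))) = a); [apply; lia | lia].
case: (posnP k) => [-> | k_gt0]; first by rewrite rot0 takel_cat ?size_s // -size_s take_size.
rewrite rot_cat_small ?size_s; last by lia.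
rewrite take_cat size_drop size_s ltnNge (_ : r - k <= r) /=; last by lia.
rewrite takel_cat; last by lia.
rewrite (_ : r - (r - k) = k); last by lia.
by rewrite set_cat setUC; apply: straddle_indep; rewrite k_gt0.
Qed.

End CyclicWindows.

Section InsertionWindows.
Variables (T : finType) (M : matroid T) (S : {set T}) (ys : seq T).
Hypotheses (paving_M : paving M) (basis_S : basis M S) (uniq_ys : uniq ys)
  (ys_notin_S : {in ys, forall y, y \notin S}) (rank_le_size : rank M <= size ys)
  (windows_ys : windows_basis M ys).

Local Notation r := (rank M).

Let uniq_rev_ys : uniq (rev ys). Proof. by rewrite rev_uniq. Qed.
Let rev_ys_notin_S : {in rev ys, forall y, y \notin S}.
Proof. by move=> y; rewrite mem_rev; apply: ys_notin_S. Qed.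
Let rank_le_size_rev : r <= size (rev ys). Proof. by rewrite size_rev. Qed.

(* The window of [ys] made of its last [r - k] and first [k] entries would
   lie in the closure of [S :\ x]. *)
Lemma Hfam_layers_not_full k x : 1 <= k <= #|S| - 1 -> x \in S ->
  (forall D : {set T}, D \subset S :\ x -> #|D| = k -> D \in Hfam M S (rev ys)) ->
  ~ (forall D : {set T}, D \subset S :\ x -> #|D| = #|S| - k -> D \in Hfam M S ys).
Proof.
rewrite (card_basis basis_S) => lt_k xS layer1 layer2.
have subWS : S :\ x \subset S := subD1set S x.
have cardW : #|S :\ x|.+1 = r by rewrite -(card_basis basis_S) (cardsD1 x S) xS.
have dep1 := Hfam_layer_dependent paving_M uniq_rev_ys rev_ys_notin_S rank_le_size_rev
  subWS cardW (n := k) ltac:(lia) layer1.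
have dep2 := Hfam_layer_dependent paving_M uniq_ys ys_notin_S rank_le_size
  subWS cardW (n := r - k) ltac:(lia) layer2.
rewrite (_ : r - (r - k) = k) in dep2; last by lia.
set Xa := [set y in take (r - k) (rev ys)] in dep1.
set Yk := [set y in take k ys] in dep2.
have window : basis M (Xa :|: Yk).
  rewrite -set_take_rot_wrap subnK; [exact: windows_ys | lia | lia | lia].
case/andP: (window) => + _; apply/negP.
apply: (@card_rank_dependent _ M (S :\ x) (Xa :|: Yk :|: S :\ x)).
- by apply: paving_indep => //; rewrite -ltnS cardW.
- exact: cardW.
- move=> v /setUP [/setUP [vX | vY] | vW] vWn; last by rewrite vW in vWn.
  + apply: dep1; first by rewrite subUset sub1set in_setU vX subsetUr.
    by rewrite cardsU1 vWn add1n cardW.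
  + apply: dep2; first by rewrite subUset sub1set in_setU vY subsetUr.
    by rewrite cardsU1 vWn add1n cardW.
- exact: subsetUl.
- exact: card_basis window.
Qed.

Lemma Hfam_spair : 0 < r -> spair S (Hfam M S (rev ys)) (Hfam M S ys).
Proof.
move=> r_gt0; split.
- apply/andP; split; apply/subsetP=> D; rewrite powersetE.
    by rewrite (mem_Hfam paving_M uniq_rev_ys rev_ys_notin_S rank_le_size_rev) => /and4P [].
  by rewrite (mem_Hfam paving_M uniq_ys ys_notin_S rank_le_size) => /and4P [].
- by move=> _ [->|->]; apply: Hfam_subset_closed.
- by move=> _ [->|->]; apply: Hfam_union_closed.
- by move=> _ [->|->]; apply: Hfam_nontrivial.
- exact: Hfam_layers_not_full.
Qed.

Lemma uniq_cat_basis s : uniq s -> [set x in s] = S -> uniq (s ++ ys).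
Proof.
move=> uniq_s defS; rewrite cat_uniq uniq_s uniq_ys andbT; apply/hasPn=> y ys_y.
by apply: contra (ys_notin_S ys_y); rewrite -defS inE.
Qed.

Lemma Hfam_order_consistent : 0 < r ->
  (forall s, uniq s -> [set x in s] = S -> ~ windows_basis M (s ++ ys)) ->
  order_consistent S (Hfam M S (rev ys)) (Hfam M S ys).
Proof.
move=> r_gt0 no_insertion s uniq_s defS.
have size_s : size s = r by rewrite -(card_basis basis_S) -defS cardsE (card_uniqP uniq_s).
have subS (s' : seq T) : {subset s' <= s} -> [set x in s'] \subset S.
  by move=> sub_s'; apply/subsetP=> y; rewrite -defS !inE => /sub_s'.
case: (boolP (has (fun i => ([set x in take i s] \in Hfam M S (rev ys))
                        || ([set x in drop i.-1 s] \in Hfam M S ys)) (iota 1 (size s)))).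
  case/hasP=> i; rewrite mem_iota => /andP [i_gt0 lt_i_s] /orP in_H.
  by exists i; [apply/andP; split; lia | exact: in_H].
move/hasPn=> none_in; case: (no_insertion s uniq_s defS).
apply: windows_basis_cat => //.
- exact: uniq_cat_basis.
- by rewrite defS; case/andP: basis_S.
- move=> c lt_c; apply/negPn/negP=> dep.
  have c_in : c \in iota 1 (size s) by rewrite mem_iota size_s; lia.
  case/negP: (none_in c c_in); apply/orP; left.
  rewrite (mem_Hfam paving_M uniq_rev_ys rev_ys_notin_S rank_le_size_rev).
  rewrite subS; last exact: mem_take.
  by rewrite card_set_take ?size_s // ?dep; [apply/andP; split; lia | lia].
- move=> c lt_c; apply/negPn/negP=> dep.
  have c1_in : c.+1 \in iota 1 (size s) by rewrite mem_iota size_s; lia.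
  case/negP: (none_in c.+1 c1_in); apply/orP; right.
  rewrite (mem_Hfam paving_M uniq_ys ys_notin_S rank_le_size).
  rewrite subS; last exact: mem_drop.
  rewrite card_set_drop // size_s (_ : r - (r - c) = c) ?dep; last by lia.
  by apply/andP; split; lia.
Qed.

End InsertionWindows.

Theorem mainTheorem10 (T : finType) (M : matroid T) (S : {set T})
    (es : seq T) (j : nat) :
  paving M -> 3 <= rank M -> basis M S ->
  rank M <= size es -> cyclic_ordering M (~: S) es ->
  (forall i, 1 <= i <= size es -> forall p : seq T, perm_eq p (enum S) ->
     ~ cyclic_ordering M [set: T] (take i es ++ p ++ drop i es)) ->
  1 <= j <= size es ->
  spair S (Hfam M S (rev (rot j.-1 es))) (Hfam M S (rot j.-1 es)) /\
  order_consistent S (Hfam M S (rev (rot j.-1 es))) (Hfam M S (rot j.-1 es)).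
Proof.
move=> paving_M rank_ge3 basis_S le_r_es cyc_es no_insertion j_range.
have r_gt0 : 0 < rank M by lia.
have [i i_range ->] : exists2 i, 1 <= i <= size es & rot j.-1 es = rot i es.
  case: (posnP j.-1) => [-> | j_gt1]; last by exists j.-1 => //; lia.
  by exists (size es); rewrite ?rot0 ?rot_size //; lia.
have [uniq_es set_es _] := cyc_es.
have set_ys : [set x in rot i es] = ~: S by rewrite -set_es; apply/setP=> y; rewrite !inE mem_rot.
have ys_notin_S : {in rot i es, forall y, y \notin S}.
  by move=> y ys_y; rewrite -in_setC -set_ys inE.
have uniq_ys : uniq (rot i es) by rewrite rot_uniq.
have le_r_ys : rank M <= size (rot i es) by rewrite size_rot.
have windows_ys : windows_basis M (rot i es).
  by apply/windows_basis_rot/(cyclic_ordering_windows _ cyc_es); lia.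
split; first exact: Hfam_spair.
apply: Hfam_order_consistent => // s uniq_s set_s windows_sys.
apply: (no_insertion i i_range s).
  by apply: uniq_perm; rewrite ?enum_uniq // => y; rewrite mem_enum -set_s inE.
rewrite insert_rotr; last by case/andP: i_range.
have <- : [set x in rotr i (s ++ rot i es)] = [set: T].
  rewrite -(setUCr S) -set_ys -set_s -set_cat.
  by apply/setP=> y; rewrite !inE mem_rotr.
apply: windows_basis_cyclic_ordering.
  by rewrite rotr_uniq (uniq_cat_basis uniq_ys ys_notin_S uniq_s set_s).
exact: windows_basis_rot.
Qed.
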